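(* Let $(\mathcal{X},d)$ be a finite metric space $\mathcal{X}=\{x_0,\dots,x_n\}$ ($n\ge1$, pairwise distinct points), let $(\mathcal{Y},\|\cdot\|)$ be a non-trivial, strictly convex real Banach space, let $y\in\operatorname{Lip}^1_0$ and let $v\in\mathcal{Y}$ with $\|v\|=1$. Define $D=\{t=(t_0,\dots,t_n)\in\mathbb{R}^{n+1} : (y_0+t_0v,\dots,y_n+t_nv)\in\operatorname{Lip}^1_0\}$. Then $D$ is a nonempty, convex, compact subset of $\{0\}\times\mathbb{R}^n$, and for every extreme point $t\in\operatorname{ext}(D)$ the point $(y_0+t_0v,\dots,y_n+t_nv)$ is an extreme point of $\operatorname{Lip}^1_0$.
   Context: $\operatorname{Lip}^1_0$ denotes the set of all $y=(y_0,\dots,y_n)\in\mathcal{Y}^{n+1}$ with $y_0=0$ and $\|y_i-y_j\|\le d(x_i,x_j)$ for all $i,j\in\{0,1,\dots,n\}$. $\operatorname{ext}(C)$ denotes the set of extreme points of a convex set $C$. *)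

From mathcomp Require Import all_boot all_algebra all_classical all_reals all_analysis.
Import GRing.Theory Num.Theory numFieldTopology.Exports numFieldNormedType.Exports.
Local Open Scope classical_set_scope.
Local Open Scope ring_scope.

(* (d : 'I_n.+1 -> 'I_n.+1 -> R) is a metric on the index set {0,..,n};
   the points x_i are identified with their indices (pairwise distinct
   points = positive distance between distinct indices). *)
Definition is_metric {R : realType} {n : nat} (d : 'I_n.+1 -> 'I_n.+1 -> R) :=
  (forall i j, (d i j == 0) = (i == j)) /\
  (forall i j, 0 <= d i j) /\
  (forall i j, d i j = d j i) /\
  (forall i j k, d i k <= d i j + d j k).

Definition strictly_convex {R : realType} (Y : normedModType R) :=
  forall x y : Y, `|x| = 1 -> `|y| = 1 -> x != y -> `|2^-1 *: (x + y)| < 1.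

Definition Lip10 {R : realType} {Y : normedModType R} {n : nat}
  (d : 'I_n.+1 -> 'I_n.+1 -> R) : set {ffun 'I_n.+1 -> Y} :=
  [set y | y ord0 = 0 /\ forall i j, `|y i - y j| <= d i j].

Definition extreme_point {R : numDomainType} {V : lmodType R} (C : set V) (x : V) :=
  C x /\ forall a b (l : R), C a -> C b -> 0 < l < 1 ->
    x = l *: a + (1 - l) *: b -> a = b.

Definition shift_dir {R : realType} {Y : normedModType R} {n : nat}
  (y : {ffun 'I_n.+1 -> Y}) (v : Y) (t : 'rV[R]_n.+1) : {ffun 'I_n.+1 -> Y} :=
  [ffun i => y i + t ord0 i *: v].

Definition Dset {R : realType} {Y : normedModType R} {n : nat}
  (d : 'I_n.+1 -> 'I_n.+1 -> R) (y : {ffun 'I_n.+1 -> Y}) (v : Y)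
  : set 'rV[R]_n.+1 :=
  [set t | Lip10 d (shift_dir y v t)].

(* Since t |-> y + t v is affine and
   Lip^1_0 is convex and cut out by finitely many closed conditions, D is a
   convex closed set containing 0; each coordinate t_i is bounded by
   d(x_i, x_0) + |y_i|, so D is compact, and t_0 = 0 because y_0 = 0.

   For the extreme points, call a pair (i, j) tight for z in Lip^1_0 when
   |z_i - z_j| = d(x_i, x_j).  In a strictly convex space, tight pairs are
   rigid under proper convex decompositions of z, so if the tight pairs of z
   connect every point to x_0, then z is an extreme point of Lip^1_0.  If
   some point is not tight-connected to x_0, translating all such points by
   +-e v, with e the least slack of the non-tight pairs, stays in Lip^1_0;
   hence an extreme t of D yields a connected tight graph for y + t v, and
   y + t v is extreme in Lip^1_0. *)

From mathcomp Require Import all_boot all_algebra all_classical all_reals all_analysis.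
From mathcomp Require Import ring lra.
Import GRing.Theory Num.Theory numFieldTopology.Exports numFieldNormedType.Exports.
Import order.Order.TTheory.
Local Open Scope classical_set_scope.
Local Open Scope ring_scope.

Section ConvexCombinationNorm.
Context {R : realFieldType} {V : normedModType R}.

Lemma convex_combC (p q : V) (l : R) :
  l *: p + (1 - l) *: q = (1 - l) *: q + (1 - (1 - l)) *: p.
Proof. by rewrite subKr addrC. Qed.

Lemma norm_convex_comb (p q : V) (l : R) : 0 <= l <= 1 ->
  `|l *: p + (1 - l) *: q| <= l * `|p| + (1 - l) * `|q|.
Proof.
case/andP=> l0 l1; apply: le_trans (ler_normD _ _) _.
by rewrite !normrZ !ger0_norm // subr_ge0.
Qed.

Lemma norm_convex_comb_eq (p q : V) (r l : R) : 0 < l < 1 ->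
  `|p| <= r -> `|q| <= r -> `|l *: p + (1 - l) *: q| = r -> `|p| = r.
Proof.
case/andP=> l0 l1 pr qr comb_r.
have hl : 0 <= l <= 1 by rewrite !ltW.
have := norm_convex_comb p q l hl; rewrite comb_r => tri.
have q_part : (1 - l) * `|q| <= (1 - l) * r by rewrite ler_wpM2l // subr_ge0 ltW.
by apply/eqP; rewrite eq_le pr -(ler_pM2l l0); lra.
Qed.

End ConvexCombinationNorm.

Section StrictConvexity.
Context {R : realType} {Y : normedModType R}.
Hypothesis strictY : strictly_convex Y.

Lemma strictly_convex_midpoint (p q : Y) (r : R) : 0 < r ->
  `|p| = r -> `|q| = r -> p != q -> `|2^-1 *: (p + q)| < r.
Proof.
move=> r0 pr qr pq.
have r_neq0 : r != 0 by rewrite gt_eqF.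
have unit_norm (w : Y) : `|w| = r -> `|r^-1 *: w| = 1.
  by move=> wr; rewrite normrZ ger0_norm ?invr_ge0 ?ltW // wr mulVf.
have : `|2^-1 *: (r^-1 *: p + r^-1 *: q)| < 1.
  apply: strictY; [exact: unit_norm|exact: unit_norm|].
  by apply: contra pq => /eqP/(congr1 ( *:%R r)); rewrite !scalerA mulfV // !scale1r => ->.
rewrite -scalerDr scalerA mulrC -scalerA normrZ ger0_norm ?invr_ge0 ?ltW //.
by rewrite ltr_pdivrMl // mulr1.
Qed.

Lemma strictly_convex_comb (p q : Y) (r l : R) : 0 < r -> 0 < l < 1 ->
  `|p| <= r -> `|q| <= r -> `|l *: p + (1 - l) *: q| = r -> p = q.
Proof.
wlog l_half : p q l / l <= 2^-1 => [hwlog|] r0 hl pr qr comb_r.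
  have [l_half|/ltW l_half] := leP l 2^-1; first exact: (hwlog p q l).
  have [l0 l1] := andP hl.
  apply/esym; apply: (hwlog q p (1 - l)) => //; first lra.
  - by rewrite subr_gt0 l1 ltrBlDr ltrDl.
  - by rewrite -convex_combC.
have [l0 l1] := andP hl.
have p_r := norm_convex_comb_eq p q r l hl pr qr comb_r.
have q_r : `|q| = r.
  apply: (norm_convex_comb_eq q p r (1 - l) _ qr pr); last by rewrite -convex_combC.
  by rewrite subr_gt0 l1 ltrBlDr ltrDl.
apply/eqP; apply: contraT => pq.
have mid_lt := strictly_convex_midpoint p q r r0 p_r q_r pq.
have split_comb : l *: p + (1 - l) *: q =
    (2 * l) *: (2^-1 *: (p + q)) + (1 - 2 * l) *: q.
  rewrite [in RHS]scalerA mulrAC mulfV ?pnatr_eq0 // mul1r scalerDr -addrA -scalerDl.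
  by congr (_ + _ *: _); ring.
have : `|l *: p + (1 - l) *: q| < r.
  rewrite split_comb; apply: le_lt_trans (ler_normD _ _) _.
  set m := 2^-1 *: (p + q) in mid_lt *.
  have gain : 0 < 2 * l * (r - `|m|) by rewrite !mulr_gt0 ?subr_gt0.
  rewrite (normrZ (2 * l)) (normrZ (1 - 2 * l)) q_r !ger0_norm; lra.
by rewrite comb_r ltxx.
Qed.

End StrictConvexity.

Section LipschitzTuples.
Context {R : realType} {Y : normedModType R} {n : nat}.
Variable d : 'I_n.+1 -> 'I_n.+1 -> R.

Lemma convex_comb_diff (a b : {ffun 'I_n.+1 -> Y}) (l : R) (i j : 'I_n.+1) :
  (l *: a + (1 - l) *: b) i - (l *: a + (1 - l) *: b) j =
  l *: (a i - a j) + (1 - l) *: (b i - b j).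
Proof. by rewrite !ffunE !scalerBr opprD addrACA. Qed.

Lemma Lip10_convex (a b : {ffun 'I_n.+1 -> Y}) (l : R) : 0 <= l <= 1 ->
  Lip10 d a -> Lip10 d b -> Lip10 d (l *: a + (1 - l) *: b).
Proof.
move=> /[dup] hl /andP[l0 l1] [a0 La] [b0 Lb]; split.
  by rewrite !ffunE a0 b0 !scaler0 addr0.
move=> i j; rewrite convex_comb_diff.
apply: le_trans (norm_convex_comb _ _ _ hl) _.
have -> : d i j = l * d i j + (1 - l) * d i j by ring.
by rewrite lerD // ler_wpM2l ?subr_ge0.
Qed.

Lemma shift_dirE (y : {ffun 'I_n.+1 -> Y}) (v : Y) (t : 'rV[R]_n.+1) i :
  shift_dir y v t i = y i + t ord0 i *: v.
Proof. by rewrite ffunE. Qed.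

Lemma shift_dir0 (y : {ffun 'I_n.+1 -> Y}) (v : Y) : shift_dir y v 0 = y.
Proof. by apply/ffunP => i; rewrite shift_dirE mxE scale0r addr0. Qed.

Lemma shift_dirD (y : {ffun 'I_n.+1 -> Y}) (v : Y) (s t : 'rV[R]_n.+1) :
  shift_dir y v (s + t) = shift_dir (shift_dir y v s) v t.
Proof. by apply/ffunP => i; rewrite !shift_dirE mxE scalerDl addrA. Qed.

Lemma shift_dir_comb (y : {ffun 'I_n.+1 -> Y}) (v : Y) (s t : 'rV[R]_n.+1) l :
  shift_dir y v (l *: s + (1 - l) *: t) =
  l *: shift_dir y v s + (1 - l) *: shift_dir y v t.
Proof.
apply/ffunP => i; rewrite !ffunE !mxE !scalerDr addrACA -scalerDl.
by rewrite [l + _]addrC subrK scale1r !scalerA -scalerDl.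
Qed.

Section ParameterSet.
Variables (y : {ffun 'I_n.+1 -> Y}) (v : Y).
Hypotheses (Ly : Lip10 d y) (v1 : `|v| = 1).

Lemma Dset0 : Dset d y v 0.
Proof. by rewrite /Dset /= shift_dir0. Qed.

Lemma Dset_ord0 (t : 'rV[R]_n.+1) : Dset d y v t -> t ord0 ord0 = 0.
Proof.
have v0 : v != 0 by rewrite -normr_eq0 v1 oner_eq0.
case=> + _; rewrite shift_dirE Ly.1 add0r => /eqP.
by rewrite scaler_eq0 (negbTE v0) orbF => /eqP.
Qed.

(* D is convex, as the preimage of the convex set Lip^1_0 by an affine map. *)
Lemma Dset_convex : @convex_set R 'rV[R]_n.+1 (Dset d y v).
Proof.
move=> s t l; rewrite !inE => Ds Dt.
have -> : conv l s t = l%:num *: s + (1 - l%:num) *: t :> 'rV[R]_n.+1 by [].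
by rewrite /Dset /= shift_dir_comb; apply: Lip10_convex => //; rewrite ge0 le1.
Qed.

(* Since the shifted tuple is 1-Lipschitz and vanishes at x_0, each
   coordinate of a parameter in D is bounded by d(x_i, x_0) + |y_i|. *)
Lemma Dset_coord_bound (t : 'rV[R]_n.+1) i :
  Dset d y v t -> `|t ord0 i| <= d i ord0 + `|y i|.
Proof.
move=> Dt; have [z0 Lz] := Dt.
have := Lz i ord0; rewrite z0 subr0 shift_dirE => yt_le.
rewrite -[`|t ord0 i|]mulr1 -v1 -normrZ -[_ *: v](addKr (y i)).
apply: le_trans (ler_normD _ _) _.
by rewrite normrN addrC lerD2r.
Qed.

Lemma Dset_bounded : bounded_set (Dset d y v).
Proof.
pose K := \sum_i (d i ord0 + `|y i|).
have d_ge0 i : 0 <= d i ord0 + `|y i|.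
  exact: le_trans (normr_ge0 _) (Dset_coord_bound 0 i Dset0).
have K0 : 0 <= K by rewrite sumr_ge0.
exists K; split; first by rewrite ger0_real.
move=> M KM t Dt /=; rewrite /Num.Def.normr /= mx_normrE.
apply: bigmax_le => [|[i j] _ /=]; first exact: le_trans K0 (ltW KM).
rewrite (ord1 i); apply: le_trans (Dset_coord_bound t j Dt) _.
apply: le_trans (ltW KM); rewrite /K (bigD1 j) //= lerDl.
by rewrite sumr_ge0.
Qed.

Lemma shift_dir_continuous i :
  continuous (fun t : 'rV[R]_n.+1 => shift_dir y v t i).
Proof.
move=> t; under eq_fun do rewrite shift_dirE.
exact: cvgD (cvg_cst _) (cvgZ (@coord_continuous R 1 n.+1 ord0 i t) (cvg_cst v)).
Qed.

(* D is cut out by finitely many non-strict inequalities between continuous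
   functions of the parameter, hence closed. *)
Lemma Dset_closed : closed (Dset d y v).
Proof.
pose dist_gap (p : 'I_n.+1 * 'I_n.+1) (t : 'rV[R]_n.+1) : R :=
  `|shift_dir y v t p.1 - shift_dir y v t p.2| - d p.1 p.2.
have -> : Dset d y v = [set t | `|shift_dir y v t ord0| <= 0] `&`
    \bigcap_(p in setT) (dist_gap p @^-1` [set x | x <= 0]).
  apply/seteqP; split=> t.
    by case=> t0 Lt; split=> [|p _]; rewrite /= ?t0 ?normr0 // subr_le0.
  case=> /= t0 Lt; split; first by apply/eqP; rewrite -normr_le0.
  by move=> i j; have := Lt (i, j) I; rewrite /= subr_le0.
apply: closedI.
  apply: preimage_closed (@closed_le _ 0) => t _.
  exact: cvg_norm (shift_dir_continuous _ t).
apply: closed_bigI => p _; apply: preimage_closed; last exact: closed_le.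
move=> t _; rewrite /dist_gap.
exact: cvgB (cvg_norm (cvgB (shift_dir_continuous p.1 t)
  (shift_dir_continuous p.2 t))) (cvg_cst _).
Qed.

End ParameterSet.

End LipschitzTuples.

Lemma connect_const {T : finType} {U : eqType} {e : rel T} {f : T -> U} :
  (forall x y, e x y -> f x = f y) -> forall {x y}, connect e x y -> f x = f y.
Proof.
move=> f_edge x y.
have closed_fx : fingraph.closed e [pred k | f k == f x].
  by move=> u w /f_edge; rewrite !inE => ->.
by move/(closed_connect closed_fx); rewrite !inE eqxx => /esym/eqP.
Qed.

Section TightPairs.
Context {R : realType} {Y : normedModType R} {n : nat}.
Variable d : 'I_n.+1 -> 'I_n.+1 -> R.
Hypothesis d_metric : is_metric d.

Definition tight (z : {ffun 'I_n.+1 -> Y}) : rel 'I_n.+1 :=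
  [rel i j | `|z i - z j| == d i j].

Lemma tight_sym (z : {ffun 'I_n.+1 -> Y}) : symmetric (tight z).
Proof. by move=> i j; rewrite /tight /= -normrN opprB d_metric.2.2.1. Qed.

Hypothesis strictY : strictly_convex Y.

(* Strict convexity makes tight pairs rigid: if a proper convex combination
   of two elements [a], [b] of Lip^1_0 is tight on (i, j), then [a] and [b]
   have the same increment from j to i, i.e. a - b takes the same value at
   i and j. *)
Lemma tight_rigid {a b : {ffun 'I_n.+1 -> Y}} {l : R} {i j : 'I_n.+1} :
  Lip10 d a -> Lip10 d b -> 0 < l < 1 ->
  tight (l *: a + (1 - l) *: b) i j -> a i - b i = a j - b j.
Proof.
move=> [_ La] [_ Lb] hl /eqP tight_ij.
have [->//|ij] := eqVneq i j.
suff same_incr : a i - a j = b i - b j.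
  by rewrite -[a i](subrK (a j)) same_incr addrAC [b i - b j]addrC addrK addrC.
have [d_eq0 [d_ge0 _]] := d_metric.
have dpos : 0 < d i j by rewrite lt_neqAle eq_sym d_eq0 ij d_ge0.
apply: (strictly_convex_comb strictY _ _ (d i j) l dpos hl (La i j) (Lb i j)).
by rewrite -convex_comb_diff.
Qed.

(* An element of Lip^1_0 whose tight pairs connect every point to x_0 is an
   extreme point of Lip^1_0: in any decomposition, the difference of the two
   parts is constant along tight pairs, hence vanishes everywhere. *)
Lemma connected_extreme (z : {ffun 'I_n.+1 -> Y}) :
  Lip10 d z -> (forall i, connect (tight z) ord0 i) -> extreme_point (Lip10 d) z.
Proof.
move=> Lz z_conn; split=> // a b l La Lb hl z_comb; apply/ffunP => i.
have edge_eq u w : tight z u w -> a u - b u = a w - b w.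
  by rewrite z_comb => /(tight_rigid La Lb hl).
have := connect_const (f := fun k => a k - b k) edge_eq (z_conn i).
by rewrite La.1 Lb.1 subrr => /esym/eqP; rewrite subr_eq0 => /eqP.
Qed.

(* The slack of a non-tight pair is the gap in its Lipschitz bound; the
   margin of [z] is the least slack (tight pairs being ignored), so every
   perturbation of size at most the margin keeps non-tight pairs admissible. *)
Definition slack (z : {ffun 'I_n.+1 -> Y}) i j : R :=
  if tight z i j then 1 else d i j - `|z i - z j|.

Definition tight_margin (z : {ffun 'I_n.+1 -> Y}) : R :=
  \big[Num.min/1]_(p : 'I_n.+1 * 'I_n.+1) slack z p.1 p.2.

Lemma tight_margin_gt0 {z : {ffun 'I_n.+1 -> Y}} :
  Lip10 d z -> 0 < tight_margin z.
Proof.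
move=> [_ Lz]; rewrite /tight_margin.
elim/big_ind: _ => [|x1 x2|[i j] _]; rewrite ?ltr01 ?lt_min ?andbb //=.
  by move=> -> ->.
rewrite /slack; case: ifP => // /negbT nt.
by rewrite subr_gt0 lt_neqAle nt Lz.
Qed.

Lemma tight_margin_le {z : {ffun 'I_n.+1 -> Y}} {i j : 'I_n.+1} :
  ~~ tight z i j -> tight_margin z <= d i j - `|z i - z j|.
Proof.
move=> nt; rewrite /tight_margin (bigD1 (i, j)) //= ge_min.
by rewrite /slack (negbTE nt) lexx.
Qed.

Definition off_component (z : {ffun 'I_n.+1 -> Y}) : 'rV[R]_n.+1 :=
  \row_k (if connect (tight z) ord0 k then 0 else 1).

(* Moving, along a unit vector [v], all points not tight-connected to x_0 by
   the same amount [c], with |c| at most the margin, stays in Lip^1_0: pairs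
   inside or outside the component keep their difference, and pairs across
   it are not tight. *)
Lemma perturb_Lip10 (z : {ffun 'I_n.+1 -> Y}) (v : Y) (c : R) :
  Lip10 d z -> `|v| = 1 -> `|c| <= tight_margin z ->
  Lip10 d (shift_dir z v (c *: off_component z)).
Proof.
move=> [z0 Lz] v1 c_le.
have shiftE k : shift_dir z v (c *: off_component z) k =
    z k + (if connect (tight z) ord0 k then 0 else c) *: v.
  by rewrite shift_dirE !mxE; case: ifP; rewrite ?mulr0 ?mulr1.
have across i j (s : Y) : ~~ tight z i j -> `|s| = `|c| ->
    `|z i - z j + s| <= d i j.
  move=> nt s_c; apply: le_trans (ler_normD _ _) _.
  by have := tight_margin_le nt; rewrite s_c; lra.
split; first by rewrite shiftE connect0 scale0r addr0.
move=> i j; rewrite !shiftE.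
case Ci: (connect (tight z) ord0 i); case Cj: (connect (tight z) ord0 j);
  rewrite ?scale0r ?addr0.
- exact: Lz.
- rewrite opprD addrA; apply: across; last by rewrite normrN normrZ v1 mulr1.
  by apply: contraFN Cj => /connect1/(connect_trans Ci).
- rewrite addrAC; apply: across; last by rewrite normrZ v1 mulr1.
  by apply: contraFN Ci; rewrite tight_sym => /connect1/(connect_trans Cj).
- by rewrite opprD addrACA subrr addr0.
Qed.

(* Conversely, if [t] is extreme in D, every point is tight-connected to x_0
   for y + t v: otherwise t is the midpoint of the two admissible parameters
   t +- e chi, with chi the indicator of the points off the component of x_0
   and e the margin. *)
Lemma extreme_Dset_connected (y : {ffun 'I_n.+1 -> Y}) (v : Y) (t : 'rV[R]_n.+1) :
  `|v| = 1 -> extreme_point (Dset d y v) t ->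
  forall i, connect (tight (shift_dir y v t)) ord0 i.
Proof.
move=> v1 [Dt t_ext] i; apply: contraT => not_conn.
have Lz : Lip10 d (shift_dir y v t) := Dt.
set z := shift_dir y v t in Lz not_conn *.
set e := tight_margin z; set chi := off_component z.
have e_gt0 : 0 < e := tight_margin_gt0 Lz.
have D_perturbed c : `|c| <= e -> Dset d y v (t + c *: chi).
  by move=> c_le; rewrite /Dset /= shift_dirD; apply: perturb_Lip10.
have half : 0 < (2^-1 : R) < 1 by rewrite invr_gt0 ltr0n invf_lt1 ?ltr0n ?ltr1n.
have t_mid : t = 2^-1 *: (t + e *: chi) + (1 - 2^-1) *: (t + (- e) *: chi).
  by apply/matrixP => u k; rewrite !mxE; set w := (if _ then _ else _); field.
have e_norm : `|e| <= e by rewrite ger0_norm ?(ltW e_gt0).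
have D_minus : Dset d y v (t + (- e) *: chi) by apply: D_perturbed; rewrite normrN.
have := t_ext _ _ _ (D_perturbed e e_norm) D_minus half t_mid.
move/matrixP/(_ ord0 i); rewrite !mxE (negbTE not_conn) !mulr1 => /addrI.
by move=> e_opp; move: e_gt0; rewrite e_opp; lra.
Qed.

End TightPairs.

Theorem mainTheorem4 (R : realType) (Y : completeNormedModType R) (n : nat)
  (d : 'I_n.+1 -> 'I_n.+1 -> R) (y : {ffun 'I_n.+1 -> Y}) (v : Y) :
  (0 < n)%N ->
  is_metric d ->
  (exists z : Y, z != 0) ->
  strictly_convex Y ->
  Lip10 d y ->
  `|v| = 1 ->
  let D := Dset d y v in
  [/\ D !=set0,
      @convex_set R 'rV[R]_n.+1 D,
      compact D,
      (forall t, D t -> t ord0 ord0 = 0) &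
      (forall t, extreme_point D t -> extreme_point (@Lip10 R Y n d) (shift_dir y v t))].
Proof.
move=> _ d_metric _ strictY Ly v1 D; split.
- by exists 0; exact: Dset0.
- exact: Dset_convex.
- by apply: bounded_closed_compact; [exact: Dset_bounded|exact: Dset_closed].
- exact: Dset_ord0.
- move=> t t_ext; apply: connected_extreme => //; first exact: t_ext.1.
  exact: extreme_Dset_connected.
Qed.
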